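(* For any positive integer $n$ and any $m\in\mathbb{Z}$, \[ \sum_{l=0}^n\big(q^{-nm}z^{n-l}-z^l\big)\prod_{i=1}^l\frac{(q^m-z^i)(1-z^{n-i+1})}{(1-q^mz^{n-i+1})(1-z^i)}=0, \] as an identity of rational functions in $z$ and $q$.
   Context: The empty product (for $l=0$) equals $1$. *)

From HB Require Import structures.
From mathcomp Require Import all_boot all_order all_algebra.
Set Implicit Arguments. Unset Strict Implicit. Unset Printing Implicit Defensive.

From HB Require Import structures.
From mathcomp Require Import all_boot all_order all_algebra.
From mathcomp Require Import ring zify.
Set Implicit Arguments.
Unset Strict Implicit.
Unset Printing Implicit Defensive.

Import Order.TTheory GRing.Theory Num.Theory.
Local Open Scope ring_scope.

(* Write Q = q^m and multiply the sum by (Qz; z)_n.  The l-th product then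
   becomes [n, l]_z Q^l (z/Q; z)_l (Qz; z)_(n-l), so both halves of the sum
   are instances of the q-Vandermonde identity
     sum_k [n, k]_z b^k (a; z)_k (b; z)_(n-k) = (ab; z)_n :
   with (a, b) = (z/Q, Qz) the z^l-half is (z^2; z)_n, and after reversing the
   order of summation, with (a, b) = (Qz, z/Q), the z^(n-l)-half is
   Q^n (z^2; z)_n.  The factor Q^(-n) makes the two halves cancel. *)

Section QBinomial.

Variables (R : comPzRingType) (z : R).

Fixpoint qbin (n k : nat) : R :=
  if n is n'.+1 then (if k is k'.+1 then qbin n' k' else 0) + z ^+ k * qbin n' k
  else (k == 0%N)%:R.

Definition qpoch (a : R) (k : nat) : R := \prod_(i < k) (1 - a * z ^+ i).

Lemma qbin0 n : qbin n 0%N = 1.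
Proof. by elim: n => //= n ->; rewrite add0r mul1r. Qed.

Lemma qbin_small n k : (n < k)%N -> qbin n k = 0.
Proof. by elim: n k => [|n IHn] [|k] //= ltnk; rewrite !IHn ?mulr0 ?addr0 // ltnW. Qed.

Lemma qbinn n : qbin n n = 1.
Proof. by elim: n => //= n ->; rewrite qbin_small // mulr0 addr0. Qed.

Lemma mul_qbin_left n k :
  qbin n k * (1 - z ^+ (n - k)) = qbin n k.+1 * (1 - z ^+ k.+1).
Proof.
elim: n k => [|n IHn] [|k] /=.
- by rewrite subnn subrr mulr0 mul0r.
- by rewrite !mul0r.
- have := IHn 0%N; rewrite qbin0 mul1r subn0 expr1 => qbin1.
  transitivity (1 - z + z * (qbin n 1 * (1 - z))); last ring.
  by rewrite -qbin1 subn0 exprS; ring.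
- rewrite subSS !mulrDl IHn.
  have [ltkn | lenk] := ltnP k n; last first.
    by rewrite !qbin_small ?mulr0 ?mul0r ?addr0 // ltnW.
  have zE : z ^+ k.+1 * z ^+ (n - k) = z ^+ k.+2 * z ^+ (n - k.+1).
    by rewrite -!exprD; congr (_ ^+ _); lia.
  transitivity (qbin n k.+1 * (1 - z ^+ k.+1 * z ^+ (n - k))); first ring.
  by rewrite zE -mulrA -IHn; ring.
Qed.

Lemma qbin_sub n k : (k <= n)%N -> qbin n (n - k) = qbin n k.
Proof.
elim: n k => [|n IHn] [|k] //; rewrite ?subn0 ?qbinn ?qbin0 // subSS ltnS.
rewrite leq_eqVlt => /predU1P[-> | ltkn]; first by rewrite subnn qbin0 qbinn.
rewrite -(subnSK ltkn) /= IHn // subnSK // IHn 1?ltnW //.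
apply/eqP; rewrite -subr_eq0; apply/eqP.
transitivity (qbin n k.+1 * (1 - z ^+ k.+1) - qbin n k * (1 - z ^+ (n - k))); first ring.
by rewrite mul_qbin_left subrr.
Qed.

Lemma qpoch0 a : qpoch a 0 = 1.
Proof. exact: big_ord0. Qed.

Lemma qpochS a k : qpoch a k.+1 = (1 - a) * qpoch (a * z) k.
Proof.
rewrite /qpoch big_ord_recl mulr1; congr (_ * _).
by apply: eq_bigr => i _; rewrite /= exprS mulrA.
Qed.

Lemma qpochSr a k : qpoch a k.+1 = qpoch a k * (1 - a * z ^+ k).
Proof. exact: big_ord_recr. Qed.

Lemma qVandermonde n a b :
  \sum_(0 <= k < n.+1) qbin n k * b ^+ k * qpoch a k * qpoch b (n - k)
  = qpoch (a * b) n.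
Proof.
elim: n a b => [|n IHn] a b; first by rewrite big_nat1 !qpoch0 !mulr1.
have shifted : \sum_(0 <= k < n.+1)
    qbin n k * b ^+ k.+1 * qpoch a k.+1 * qpoch b (n.+1 - k.+1)
    = b * (1 - a) * qpoch (a * z * b) n.
  rewrite -IHn mulr_sumr; apply: eq_bigr => k _.
  by rewrite subSS qpochS exprS; ring.
have scaled : \sum_(0 <= k < n.+1)
    z ^+ k * qbin n k * b ^+ k * qpoch a k * qpoch b (n.+1 - k)
    = (1 - b) * qpoch (a * (b * z)) n.
  rewrite -IHn mulr_sumr; apply: eq_big_nat => k /andP[_ ltkn].
  by rewrite subSn // qpochS exprMn; ring.
under eq_bigr do rewrite [qbin _.+1 _]/= !mulrDl.
rewrite big_split /= big_nat_recl // [X in _ + X]big_nat_recr //= shifted scaled.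
rewrite qbin_small // !mul0r mulr0 !mul0r add0r addr0 qpochS.
by rewrite (mulrAC a z b) (mulrA a b z); ring.
Qed.

End QBinomial.

Section QRatioSum.

Variables (F : fieldType) (z Q : F).
Hypothesis Q_neq0 : Q != 0.

Lemma prod_ratio_qpoch n l :
  (l <= n)%N ->
  (forall i : nat, (1 <= i <= n)%N -> 1 - z ^+ i != 0) ->
  (forall i : nat, (1 <= i <= n)%N -> 1 - Q * z ^+ i != 0) ->
  \prod_(1 <= i < l.+1)
     ((Q - z ^+ i) * (1 - z ^+ (n - i).+1) / ((1 - Q * z ^+ (n - i).+1) * (1 - z ^+ i)))
  * qpoch z (Q * z) n
  = qbin z n l * Q ^+ l * qpoch z (z / Q) l * qpoch z (Q * z) (n - l).
Proof.
move=> + z_neq1 Qz_neq1; elim: l => [|l IHl] ltln.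
  by rewrite big_geq // qbin0 qpoch0 subn0 expr0 !mul1r.
rewrite big_nat_recr // (mulrAC (\prod_(1 <= i < l.+1) _)) IHl; last exact: ltnW.
rewrite -(subnSK ltln) !qpochSr.
have := mul_qbin_left z n l; rewrite -(subnSK ltln).
set N := (n - l.+1)%N => qbin_ratio.
have z_l_neq1 : 1 - z ^+ l.+1 != 0 by apply: z_neq1.
have N_range : (0 < N.+1 <= n)%N by rewrite subnSK // subn_gt0 ltln leq_subr.
have z_N_neq1 : 1 - z ^+ N.+1 != 0 by apply: z_neq1.
have Qz_N_neq1 : 1 - Q * z ^+ N.+1 != 0 by apply: Qz_neq1.
rewrite -(mulfK z_N_neq1 (qbin z n l)) qbin_ratio -(mulrA Q z) -exprS.
move: z_l_neq1 z_N_neq1 Qz_N_neq1; rewrite !exprS.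
move: (qbin z n l.+1) (qpoch z (z / Q) l) (qpoch z (Q * z) N) (Q ^+ l) (z ^+ l) (z ^+ N).
move=> b p r Ql zl zN z_l_neq1 z_N_neq1 Qz_N_neq1.
by field; rewrite Q_neq0 z_l_neq1 z_N_neq1 Qz_N_neq1.
Qed.

Lemma sum_qbin_qpoch n :
  \sum_(0 <= l < n.+1)
     z ^+ l * (qbin z n l * Q ^+ l * qpoch z (z / Q) l * qpoch z (Q * z) (n - l))
  = qpoch z (z * z) n.
Proof.
have zQ : z / Q * (Q * z) = z * z by field.
rewrite -zQ -qVandermonde; apply: eq_bigr => l _.
by rewrite exprMn; ring.
Qed.

Lemma sum_qbin_qpoch_rev n :
  \sum_(0 <= l < n.+1)
     z ^+ (n - l) * (qbin z n l * Q ^+ l * qpoch z (z / Q) l * qpoch z (Q * z) (n - l))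
  = Q ^+ n * qpoch z (z * z) n.
Proof.
have Qz : Q * z * (z / Q) = z * z by field.
rewrite -Qz -qVandermonde mulr_sumr big_nat_rev.
apply: eq_big_nat => l /andP[_]; rewrite ltnS => lel.
have QnE : Q ^+ n = Q ^+ (n - l) * Q ^+ l by rewrite -exprD subnK.
rewrite add0n subSS subKn // qbin_sub // QnE expr_div_n.
have Ql_neq0 : Q ^+ l != 0 by rewrite expf_neq0.
move: Ql_neq0; move: (qbin z n l) (qpoch z (z / Q) (n - l)) (qpoch z (Q * z) l).
move: (Q ^+ l) (Q ^+ (n - l)) (z ^+ l) => Ql Qnl zl b p r Ql_neq0.
by field.
Qed.

End QRatioSum.

Theorem corollary3p4 (F : fieldType) (n : nat) (m : int) (q z : F) :
  (0 < n)%N -> q != 0 ->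
  (forall i : nat, (1 <= i <= n)%N -> 1 - z ^+ i != 0) ->
  (forall i : nat, (1 <= i <= n)%N -> 1 - q ^ m * z ^+ i != 0) ->
  \sum_(0 <= l < n.+1)
     (q ^ (- (n%:Z * m)) * z ^+ (n - l) - z ^+ l) *
     \prod_(1 <= i < l.+1)
        ((q ^ m - z ^+ i) * (1 - z ^+ (n - i).+1) /
         ((1 - q ^ m * z ^+ (n - i).+1) * (1 - z ^+ i))) = 0.
Proof.
move=> _ q_neq0 z_neq1 Qz_neq1.
have -> : q ^ (- (n%:Z * m)) = (q ^ m)^-1 ^+ n.
  by rewrite -invr_expz mulrC -exprz_exp -exprnP exprVn.
move: Qz_neq1; set Q := q ^ m => Qz_neq1.
have Q_neq0 : Q != 0 by apply: expfz_neq0.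
have qpoch_neq0 : qpoch z (Q * z) n != 0.
  rewrite prodf_seq_neq0; apply/allP => i _ /=.
  by rewrite -mulrA -exprS; apply: Qz_neq1; rewrite ltn_ord.
apply: (mulIf qpoch_neq0); rewrite mul0r mulr_suml.
under eq_big_nat => l /andP[_ ltln] do
  rewrite -mulrA prod_ratio_qpoch // mulrBl -(mulrA _ (z ^+ (n - l))).
rewrite sumrB -mulr_sumr sum_qbin_qpoch_rev // sum_qbin_qpoch //.
by rewrite mulrA -exprMn mulVf // expr1n mul1r subrr.
Qed.
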